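(* Let $a,b,c\in\mathbb{R}$ with $c\neq 0$, and let $c_{1,2}=-\frac{2}{27}a^3+\frac13 ab\pm\frac{2}{27}\sqrt{(a^2-3b)^3}$ (defined when $b\le a^2/3$; upper sign for $c_1$). The cubic $x^3+ax^2+bx+c$ has three negative real roots (counted with multiplicity) if and only if $a>0$ and either (i) $0<b\le a^2/4$ and $0<c\le c_1$, or (ii) $a^2/4<b\le a^2/3$ and $0<c_2\le c\le c_1$. *)

From HB Require Import structures.
From mathcomp Require Import all_boot all_order all_algebra.
Set Implicit Arguments. Unset Strict Implicit. Unset Printing Implicit Defensive.
Import Order.TTheory GRing.Theory Num.Theory.
Local Open Scope ring_scope.

Definition c1 (R : rcfType) (a b : R) : R :=
  - (2 / 27) * a ^+ 3 + (1 / 3) * a * b + (2 / 27) * Num.sqrt ((a ^+ 2 - 3 * b) ^+ 3).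

Definition c2 (R : rcfType) (a b : R) : R :=
  - (2 / 27) * a ^+ 3 + (1 / 3) * a * b - (2 / 27) * Num.sqrt ((a ^+ 2 - 3 * b) ^+ 3).

Definition cubic (R : rcfType) (a b c : R) : {poly R} :=
  'X^3 + a *: 'X^2 + b *: 'X + c%:P.

Definition three_neg_roots (R : rcfType) (a b c : R) : Prop :=
  exists r1 r2 r3 : R, [/\ r1 < 0, r2 < 0, r3 < 0 &
    cubic a b c = ('X - r1%:P) * ('X - r2%:P) * ('X - r3%:P)].

(* A cubic has three negative roots iff its coefficients are positive (Vieta)
   and its discriminant D is nonnegative: a real cubic has a real root r, and
   the discriminant of (X - r)(X^2 + pX + q) is (p^2 - 4q)(r^2 + pr + q)^2, so
   D >= 0 makes the quadratic factor split.  As a quadratic in c,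
   27 D = 4 (a^2 - 3b)^3 - (27c + 2a^3 - 9ab)^2, hence D >= 0 iff a^2 >= 3b
   and c2 <= c <= c1.  Finally c1 c2 = b^2 (4b - a^2) / 27 tells whether
   c2 <= 0 (so that 0 < c is the binding lower bound) or c2 > 0. *)

From HB Require Import structures.
From mathcomp Require Import all_boot all_order all_algebra.
From mathcomp Require Import ring lra polyrcf.
Set Implicit Arguments.
Unset Strict Implicit.
Unset Printing Implicit Defensive.

Import Order.TTheory GRing.Theory Num.Theory.
Local Open Scope ring_scope.

Section Cubic.

Variable R : rcfType.
Implicit Types a b c p q r x : R.

Lemma horner_cubic a b c x : (cubic a b c).[x] = x ^+ 3 + a * x ^+ 2 + b * x + c.
Proof. by rewrite /cubic !hornerE. Qed.

Lemma size_cubic a b c : size (cubic a b c) = 4%N.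
Proof.
rewrite /cubic -!addrA size_polyDl size_polyXn // ltnS.
apply: (leq_trans (size_polyD _ _)).
rewrite geq_max (leq_trans (size_scale_leq _ _)) ?size_polyXn //.
apply: (leq_trans (size_polyD _ _)).
rewrite geq_max (leq_trans (size_scale_leq _ _)) ?size_polyX //.
exact: leq_trans (size_polyC_leq1 _) _.
Qed.

Lemma cubic_inj a b c a' b' c' :
  cubic a b c = cubic a' b' c' -> [/\ a = a', b = b' & c = c'].
Proof.
move=> E; have coef i := congr1 (fun P : {poly R} => P`_i) E.
move: (coef 2%N) (coef 1%N) (coef 0%N).
by rewrite /cubic !coefE /= !(mulr0, mulr1, addr0, add0r) => -> -> ->.
Qed.

Lemma cubic_prod_XsubC r1 r2 r3 :
  ('X - r1%:P) * ('X - r2%:P) * ('X - r3%:P) =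
  cubic (- (r1 + r2 + r3)) (r1 * r2 + r1 * r3 + r2 * r3) (- (r1 * r2 * r3)).
Proof. by rewrite /cubic -!mul_polyC !(polyCN, polyCD, polyCM); ring. Qed.

Lemma cubic_has_root a b c : exists r, root (cubic a b c) r.
Proof.
have even_size : ~~ odd (size (cubic a b c)) by rewrite size_cubic.
by have [r] := odd_poly_root even_size; exists r.
Qed.

Lemma cubic_root_lt0 a b c x : 0 < a -> 0 < b -> 0 < c ->
  root (cubic a b c) x -> x < 0.
Proof.
move=> a_gt0 b_gt0 c_gt0; rewrite /root horner_cubic => /eqP x_root.
rewrite ltNge; apply/negP => x_ge0.
have : 0 <= x ^+ 3 + a * x ^+ 2 + b * x.
  by rewrite !addr_ge0 ?exprn_ge0 //; apply: mulr_ge0; rewrite ?sqr_ge0 // ltW.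
lra.
Qed.

Definition cubic_disc a b c : R :=
  18 * a * b * c - 4 * a ^+ 3 * c + a ^+ 2 * b ^+ 2 - 4 * b ^+ 3 - 27 * c ^+ 2.

Lemma cubic_disc_prod r1 r2 r3 :
  cubic_disc (- (r1 + r2 + r3)) (r1 * r2 + r1 * r3 + r2 * r3) (- (r1 * r2 * r3)) =
  ((r1 - r2) * (r1 - r3) * (r2 - r3)) ^+ 2.
Proof. by rewrite /cubic_disc; ring. Qed.

Lemma quadratic_real_roots p q : 0 <= p ^+ 2 - 4 * q ->
  exists s1 s2, s1 + s2 = - p /\ s1 * s2 = q.
Proof.
move=> disc_ge0; pose d := Num.sqrt (p ^+ 2 - 4 * q).
have d2 : d ^+ 2 = p ^+ 2 - 4 * q by rewrite sqr_sqrtr.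
exists ((- p + d) / 2), ((- p - d) / 2); split; first by field.
have -> : (- p + d) / 2 * ((- p - d) / 2) = (p ^+ 2 - d ^+ 2) / 4 by field.
by rewrite d2; field.
Qed.

Lemma cubic_split a b c r : root (cubic a b c) r -> 0 <= cubic_disc a b c ->
  exists s1 s2, cubic a b c = ('X - r%:P) * ('X - s1%:P) * ('X - s2%:P).
Proof.
rewrite /root horner_cubic => /eqP r_root.
pose p := a + r; pose q := b + r * p.
have [-> -> ->] : [/\ a = p - r, b = q - r * p & c = - (r * q)].
  by rewrite /q /p; split; lra.
clearbody p q => {r_root}.
have -> : cubic_disc (p - r) (q - r * p) (- (r * q)) =
          (p ^+ 2 - 4 * q) * (r ^+ 2 + p * r + q) ^+ 2.
  by rewrite /cubic_disc; ring.
move=> disc_ge0.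
have D_ge0 : 0 <= p ^+ 2 - 4 * q.
  have [Qr0 | Qr_neq0] := eqVneq (r ^+ 2 + p * r + q) 0.
    by rewrite (_ : _ - _ = (p + 2 * r) ^+ 2) ?sqr_ge0 //; lra.
  have Qr2_gt0 : 0 < (r ^+ 2 + p * r + q) ^+ 2 by rewrite exprn_even_gt0 ?Qr_neq0 ?orbT.
  by rewrite -(pmulr_lge0 _ Qr2_gt0).
have [s1 [s2 [sum prod]]] := quadratic_real_roots D_ge0.
have -> : p = - (s1 + s2) by rewrite sum opprK.
by exists s1, s2; rewrite cubic_prod_XsubC -prod; congr cubic; ring.
Qed.

Lemma three_neg_rootsP a b c :
  three_neg_roots a b c <-> [/\ 0 < a, 0 < b, 0 < c & 0 <= cubic_disc a b c].
Proof.
split=> [[r1 [r2 [r3 [r1_lt0 r2_lt0 r3_lt0]]]] | [a_gt0 b_gt0 c_gt0 disc_ge0]].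
  rewrite cubic_prod_XsubC => /cubic_inj[-> -> ->].
  have r12 : 0 < r1 * r2 by rewrite nmulr_rgt0.
  have r13 : 0 < r1 * r3 by rewrite nmulr_rgt0.
  have r23 : 0 < r2 * r3 by rewrite nmulr_rgt0.
  rewrite cubic_disc_prod sqr_ge0; split=> //; try lra.
  by rewrite oppr_gt0 pmulr_rlt0.
have [r r_root] := cubic_has_root a b c.
have [s1 [s2 E]] := cubic_split r_root disc_ge0.
have root_lt0 := cubic_root_lt0 a_gt0 b_gt0 c_gt0.
by exists r, s1, s2; split; rewrite ?E //; apply: root_lt0;
  rewrite E !rootM !root_XsubC eqxx ?orbT.
Qed.

Lemma cubic_disc_sqr a b c :
  27 * cubic_disc a b c =
  4 * (a ^+ 2 - 3 * b) ^+ 3 - (27 * c + 2 * a ^+ 3 - 9 * a * b) ^+ 2.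
Proof. by rewrite /cubic_disc; ring. Qed.

Lemma cubic_disc_c12 a b c : 0 <= a ^+ 2 - 3 * b ->
  cubic_disc a b c = - 27 * ((c - c1 a b) * (c - c2 a b)).
Proof.
move=> a2_3b_ge0; have s2 := sqr_sqrtr (exprn_ge0 3 a2_3b_ge0).
apply: (@mulfI _ 27); first by rewrite pnatr_eq0.
by rewrite cubic_disc_sqr -s2 /c1 /c2; field.
Qed.

Lemma c2_le_c1 a b : c2 a b <= c1 a b.
Proof. by rewrite /c1 /c2; have := sqrtr_ge0 ((a ^+ 2 - 3 * b) ^+ 3); lra. Qed.

Lemma cubic_disc_ge0P a b c :
  0 <= cubic_disc a b c <-> 0 <= a ^+ 2 - 3 * b /\ c2 a b <= c <= c1 a b.
Proof.
have c12 := c2_le_c1 a b.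
split=> [disc_ge0 | [a2_3b_ge0 /andP[c2_le c_le1]]]; last first.
  by rewrite cubic_disc_c12 //; nra.
have a2_3b_ge0 : 0 <= a ^+ 2 - 3 * b.
  rewrite -(@exprn_odd_ge0 _ 3) //.
  have := sqr_ge0 (27 * c + 2 * a ^+ 3 - 9 * a * b); have := cubic_disc_sqr a b c; lra.
move: disc_ge0; rewrite cubic_disc_c12 // => disc_ge0.
by split=> //; apply/andP; nra.
Qed.

Lemma c1_mul_c2 a b : 0 <= a ^+ 2 - 3 * b ->
  c1 a b * c2 a b = b ^+ 2 * (4 * b - a ^+ 2) / 27.
Proof.
move=> a2_3b_ge0; have s2 := sqr_sqrtr (exprn_ge0 3 a2_3b_ge0).
apply: (@mulfI _ 729); first by rewrite pnatr_eq0.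
have -> : 729 * (b ^+ 2 * (4 * b - a ^+ 2) / 27) =
          (9 * a * b - 2 * a ^+ 3) ^+ 2 - 4 * (a ^+ 2 - 3 * b) ^+ 3 by field.
by rewrite -s2 /c1 /c2; field.
Qed.

Lemma c1_add_c2 a b : c1 a b + c2 a b = 2 * a * (9 * b - 2 * a ^+ 2) / 27.
Proof. by rewrite /c1 /c2; field. Qed.

Lemma c2_le0 a b : b <= a ^+ 2 / 4 -> c2 a b <= 0.
Proof.
move=> b_le; have a2_3b_ge0 : 0 <= a ^+ 2 - 3 * b by have := sqr_ge0 a; lra.
have := c1_mul_c2 a2_3b_ge0; have := c2_le_c1 a b; have := sqr_ge0 b; nra.
Qed.

Lemma c2_gt0 a b : 0 < a -> a ^+ 2 / 4 < b -> b <= a ^+ 2 / 3 -> 0 < c2 a b.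
Proof.
move=> a_gt0 b_gt b_le; have := sqr_ge0 a => a2_ge0.
have prod_gt0 : 0 < c1 a b * c2 a b.
  rewrite c1_mul_c2; last by lra.
  by rewrite divr_gt0 // mulr_gt0 ?exprn_gt0 //; lra.
have sum_gt0 : 0 < c1 a b + c2 a b.
  by rewrite c1_add_c2 divr_gt0 // mulr_gt0 ?mulr_gt0 //; lra.
rewrite ltNge; apply/negP => c2_le0.
have : c1 a b * c2 a b <= 0 by rewrite mulr_ge0_le0 //; lra.
lra.
Qed.

End Cubic.

Theorem mainTheorem6 (R : rcfType) (a b c : R) (hc : c != 0) :
  three_neg_roots a b c <->
  0 < a /\
  ((0 < b /\ b <= a ^+ 2 / 4 /\ 0 < c /\ c <= c1 a b) \/
   (a ^+ 2 / 4 < b /\ b <= a ^+ 2 / 3 /\ 0 < c2 a b /\ c2 a b <= c /\ c <= c1 a b)).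
Proof.
have a2_ge0 := sqr_ge0 a.
split=> [/three_neg_rootsP[a_gt0 b_gt0 c_gt0 /cubic_disc_ge0P[a2_3b_ge0 /andP[c2_le c_le1]]]
        | [a_gt0 regions]].
  split=> //; have [b_le | b_gt] := lerP b (a ^+ 2 / 4); first by left.
  by right; have := c2_gt0 a_gt0 b_gt; do !split=> //; lra.
have [b_gt0 c_gt0 a2_3b_ge0 c2_le c_le1] :
    [/\ 0 < b, 0 < c, 0 <= a ^+ 2 - 3 * b, c2 a b <= c & c <= c1 a b].
  case: regions => [[b_gt0 [b_le [c_gt0 c_le1]]] | [b_gt [b_le [c2_gt0 [c2_le c_le1]]]]].
    by have := c2_le0 b_le; split=> //; lra.
  by split=> //; lra.
by apply/three_neg_rootsP; split=> //; apply/cubic_disc_ge0P; rewrite c2_le c_le1.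
Qed.
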